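(* Let $\Psi$ be a declarative context and $A, B, C$ types with $\Psi \vdash A\ \mathsf{type}$, $\Psi \vdash B\ \mathsf{type}$ and $\Psi \vdash C\ \mathsf{type}$. If $\Psi \vdash A \le^{\pm} B$ and $\Psi \vdash B \le^{\pm} C$ (same polarity $\pm$), then $\Psi \vdash A \le^{\pm} C$.
   Context: Sorts are $\kappa \in \{\mathsf{type}, \mathbb{N}\}$. Index terms/monotypes $\tau, t$ are built from $\mathbf{1}$, universal variables $\alpha$, binary connectives $\tau_1 \oplus \tau_2$ with $\oplus \in \{\to, +, \times\}$ (sort $\mathsf{type}$), and $\mathsf{zero}$, $\mathsf{succ}(t)$ (sort $\mathbb{N}$); $\Psi \vdash t : \kappa$ means $t$ has sort $\kappa$ with its variables declared in $\Psi$. Types are $A, B, C ::= \mathbf{1} \mid \alpha \mid A \oplus B \mid \forall \alpha{:}\kappa.\,A \mid \exists \alpha{:}\kappa.\,A \mid P \supset A \mid A \wedge P \mid \mathsf{Vec}\ t\ A$ with propositions $P ::= t = t'$. A declarative context $\Psi$ is a list of declarations including universal variables $\alpha:\kappa$; $\Psi \vdash A\ \mathsf{type}$ means all free variables of $A$ are declared in $\Psi$ at appropriate sorts. A type is positive if headed by $\exists$, negative if headed by $\forall$; nonpos = not positive, nonneg = not negative. Declarative subtyping $\Psi \vdash A \le^{\pm} B$ is inductively defined by: (Refl) if $\Psi \vdash A\ \mathsf{type}$ and $A$ is nonpos and nonneg then $\Psi \vdash A \le^{\pm} A$; ($\forall$L) $\Psi \vdash \tau : \kappa$ and $\Psi \vdash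 [\tau/\alpha]A \le^- B$ give $\Psi \vdash \forall\alpha{:}\kappa.A \le^- B$; ($\forall$R) $\Psi, \beta{:}\kappa \vdash A \le^- B$ gives $\Psi \vdash A \le^- \forall\beta{:}\kappa.B$; ($\exists$L) $\Psi, \alpha{:}\kappa \vdash A \le^+ B$ gives $\Psi \vdash \exists\alpha{:}\kappa.A \le^+ B$; ($\exists$R) $\Psi \vdash \tau:\kappa$ and $\Psi \vdash A \le^+ [\tau/\beta]B$ give $\Psi \vdash A \le^+ \exists\beta{:}\kappa.B$; ($-{+}$) $\Psi \vdash A \le^- B$ with $A,B$ nonpos gives $\Psi \vdash A \le^+ B$; ($+{-}$) $\Psi \vdash A \le^+ B$ with $A,B$ nonneg gives $\Psi \vdash A \le^- B$. *)

(* Locally nameless syntax for the declarative system of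
   Dunfield & Krishnaswami style subtyping with indexed types. *)
From Stdlib Require Import List Arith.
Import ListNotations.

Inductive sort : Type := SType | SNat.

Inductive binop : Type := OArrow | OSum | OProd.

(* Types and index terms/monotypes share one syntax (as in the paper:
   monotypes tau, t are built from 1, alpha, tau1 (+) tau2, zero, succ t). *)
Inductive ty : Type :=
  | TUnit : ty
  | TFVar : nat -> ty
  | TBVar : nat -> ty
  | TBin  : binop -> ty -> ty -> ty
  | TAll  : sort -> ty -> ty
  | TEx   : sort -> ty -> ty
  | TImp  : prop -> ty -> ty
  | TWith : ty -> prop -> ty
  | TVec  : ty -> ty -> ty
  | TZero : ty
  | TSucc : ty -> ty
with prop : Type :=
  | PEq : ty -> ty -> prop.

(* opening: replace bound index k by u  (this realizes [u/alpha]A) *)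
Fixpoint open_ty (k : nat) (u : ty) (A : ty) {struct A} : ty :=
  match A with
  | TUnit => TUnit
  | TFVar a => TFVar a
  | TBVar i => if Nat.eqb i k then u else TBVar i
  | TBin o A1 A2 => TBin o (open_ty k u A1) (open_ty k u A2)
  | TAll s A1 => TAll s (open_ty (S k) u A1)
  | TEx s A1 => TEx s (open_ty (S k) u A1)
  | TImp P A1 => TImp (open_prop k u P) (open_ty k u A1)
  | TWith A1 P => TWith (open_ty k u A1) (open_prop k u P)
  | TVec t A1 => TVec (open_ty k u t) (open_ty k u A1)
  | TZero => TZero
  | TSucc t => TSucc (open_ty k u t)
  end
with open_prop (k : nat) (u : ty) (P : prop) {struct P} : prop :=
  match P with
  | PEq t1 t2 => PEq (open_ty k u t1) (open_ty k u t2)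
  end.

Definition open (A : ty) (u : ty) : ty := open_ty 0 u A.

(* Declarative contexts: the most recent declaration is at the head. *)
Inductive decl : Type :=
  | DUvar : nat -> sort -> decl
  | DVar  : nat -> ty -> decl.

Definition ctx := list decl.

Definition in_dom (a : nat) (G : ctx) : Prop :=
  exists k, In (DUvar a k) G.

Inductive sorting (G : ctx) : ty -> sort -> Prop :=
  | S_Unit : sorting G TUnit SType
  | S_Var : forall a k, In (DUvar a k) G -> sorting G (TFVar a) k
  | S_Bin : forall o t1 t2,
      sorting G t1 SType -> sorting G t2 SType -> sorting G (TBin o t1 t2) SType
  | S_Zero : sorting G TZero SNat
  | S_Succ : forall t, sorting G t SNat -> sorting G (TSucc t) SNat.

Definition wf_prop (G : ctx) (P : prop) : Prop :=
  match P with
  | PEq t1 t2 => sorting G t1 SNat /\ sorting G t2 SNat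
  end.

Inductive wf_ty (G : ctx) : ty -> Prop :=
  | W_Unit : wf_ty G TUnit
  | W_Var : forall a, In (DUvar a SType) G -> wf_ty G (TFVar a)
  | W_Bin : forall o A B, wf_ty G A -> wf_ty G B -> wf_ty G (TBin o A B)
  | W_All : forall k A (L : list nat),
      (forall a, ~ In a L -> wf_ty (DUvar a k :: G) (open A (TFVar a))) ->
      wf_ty G (TAll k A)
  | W_Ex : forall k A (L : list nat),
      (forall a, ~ In a L -> wf_ty (DUvar a k :: G) (open A (TFVar a))) ->
      wf_ty G (TEx k A)
  | W_Imp : forall P A, wf_prop G P -> wf_ty G A -> wf_ty G (TImp P A)
  | W_With : forall A P, wf_ty G A -> wf_prop G P -> wf_ty G (TWith A P)
  | W_Vec : forall t A, sorting G t SNat -> wf_ty G A -> wf_ty G (TVec t A).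

Definition positive (A : ty) : bool :=
  match A with TEx _ _ => true | _ => false end.
Definition negative (A : ty) : bool :=
  match A with TAll _ _ => true | _ => false end.
Definition nonpos (A : ty) : Prop := positive A = false.
Definition nonneg (A : ty) : Prop := negative A = false.

Inductive polarity : Type := Plus | Minus.

Inductive sub (G : ctx) : polarity -> ty -> ty -> Prop :=
  | Sub_Refl : forall p A,
      wf_ty G A -> nonpos A -> nonneg A -> sub G p A A
  | Sub_AllL : forall k A B tau,
      sorting G tau k -> sub G Minus (open A tau) B ->
      sub G Minus (TAll k A) B
  | Sub_AllR : forall k A B (L : list nat),
      (forall b, ~ In b L -> sub (DUvar b k :: G) Minus A (open B (TFVar b))) ->
      sub G Minus A (TAll k B)
  | Sub_ExL : forall k A B (L : list nat),
      (forall a, ~ In a L -> sub (DUvar a k :: G) Plus (open A (TFVar a)) B) ->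
      sub G Plus (TEx k A) B
  | Sub_ExR : forall k A B tau,
      sorting G tau k -> sub G Plus A (open B tau) ->
      sub G Plus A (TEx k B)
  | Sub_MinusPlus : forall A B,
      sub G Minus A B -> nonpos A -> nonpos B -> sub G Plus A B
  | Sub_PlusMinus : forall A B,
      sub G Plus A B -> nonneg A -> nonneg B -> sub G Minus A B.

(* Cut elimination, by induction on the number of quantifiers in the middle
   type B, with inner inductions on the two derivations.  Non-principal cuts
   are permuted upwards past the last rule of one of the derivations.  A
   principal cut (forall-R against forall-L, or exists-R against exists-L)
   is reduced by substituting the instantiating index term into the
   cofinitely quantified premise; the cut then moves to [open M tau], which
   has one quantifier fewer than [TAll k M] because index terms contain no
   quantifiers.  Since the left rules may extend the context, the inner
   induction is stated for every larger context, which weakening provides. *)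

From Stdlib Require Import List Arith Lia.
Import ListNotations.

Scheme ty_mut := Induction for ty Sort Prop
  with prop_mut := Induction for prop Sort Prop.
Combined Scheme ty_prop_mut from ty_mut, prop_mut.

Fixpoint subst_ty (b : nat) (u : ty) (A : ty) {struct A} : ty :=
  match A with
  | TUnit => TUnit
  | TFVar a => if Nat.eqb a b then u else TFVar a
  | TBVar i => TBVar i
  | TBin o A1 A2 => TBin o (subst_ty b u A1) (subst_ty b u A2)
  | TAll s A1 => TAll s (subst_ty b u A1)
  | TEx s A1 => TEx s (subst_ty b u A1)
  | TImp P A1 => TImp (subst_prop b u P) (subst_ty b u A1)
  | TWith A1 P => TWith (subst_ty b u A1) (subst_prop b u P)
  | TVec t A1 => TVec (subst_ty b u t) (subst_ty b u A1)
  | TZero => TZero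
  | TSucc t => TSucc (subst_ty b u t)
  end
with subst_prop (b : nat) (u : ty) (P : prop) {struct P} : prop :=
  match P with
  | PEq t1 t2 => PEq (subst_ty b u t1) (subst_ty b u t2)
  end.

Fixpoint fv_ty (A : ty) : list nat :=
  match A with
  | TUnit | TBVar _ | TZero => []
  | TFVar a => [a]
  | TBin _ A1 A2 => fv_ty A1 ++ fv_ty A2
  | TAll _ A1 | TEx _ A1 | TSucc A1 => fv_ty A1
  | TImp P A1 => fv_prop P ++ fv_ty A1
  | TWith A1 P => fv_ty A1 ++ fv_prop P
  | TVec t A1 => fv_ty t ++ fv_ty A1
  end
with fv_prop (P : prop) : list nat :=
  match P with PEq t1 t2 => fv_ty t1 ++ fv_ty t2 end.

Fixpoint quant_size (A : ty) : nat :=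
  match A with
  | TBin _ A1 A2 | TVec A1 A2 => quant_size A1 + quant_size A2
  | TAll _ A1 | TEx _ A1 => S (quant_size A1)
  | TImp _ A1 | TWith A1 _ | TSucc A1 => quant_size A1
  | TUnit | TFVar _ | TBVar _ | TZero => 0
  end.

Fixpoint ctx_uvars (G : ctx) : list nat :=
  match G with
  | [] => []
  | DUvar a _ :: G' => a :: ctx_uvars G'
  | DVar _ _ :: G' => ctx_uvars G'
  end.

Lemma in_ctx_uvars G a s : In (DUvar a s) G -> In a (ctx_uvars G).
Proof.
  induction G as [|[b s'|x T] G IH]; simpl; intros H; [contradiction| |];
    destruct H as [H|H]; try discriminate; try injection H as -> ->; auto.
Qed.

Lemma exists_fresh (l : list nat) : exists x, ~ In x l.
Proof.
  assert (Hbound : forall y, In y l -> y <= fold_right plus 0 l).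
  { induction l as [|z l IH]; simpl; intros y Hy; [contradiction|].
    destruct Hy as [<-|Hy]; [lia|specialize (IH y Hy); lia]. }
  exists (S (fold_right plus 0 l)); intros Hin; specialize (Hbound _ Hin); lia.
Qed.

Definition ctx_incl (G G' : ctx) : Prop :=
  forall a s, In (DUvar a s) G -> In (DUvar a s) G'.

Lemma ctx_incl_refl G : ctx_incl G G.
Proof. unfold ctx_incl; auto. Qed.

Lemma ctx_incl_cons G G' d : ctx_incl G G' -> ctx_incl (d :: G) (d :: G').
Proof. unfold ctx_incl; simpl; intuition. Qed.

Lemma ctx_incl_tl G d : ctx_incl G (d :: G).
Proof. unfold ctx_incl; simpl; auto. Qed.

Lemma sorting_weaken G G' t s : sorting G t s -> ctx_incl G G' -> sorting G' t s.
Proof. induction 1; constructor; auto. Qed.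

Lemma wf_prop_weaken G G' P : wf_prop G P -> ctx_incl G G' -> wf_prop G' P.
Proof. destruct P; simpl; intuition; eapply sorting_weaken; eauto. Qed.

Lemma wf_ty_weaken G G' A : wf_ty G A -> ctx_incl G G' -> wf_ty G' A.
Proof.
  intros HA; revert G'; induction HA; intros G' Hincl;
    econstructor; eauto using wf_prop_weaken, sorting_weaken, ctx_incl_cons.
Qed.

Lemma sub_weaken G G' p A B : sub G p A B -> ctx_incl G G' -> sub G' p A B.
Proof.
  intros HAB; revert G'; induction HAB; intros G' Hincl;
    econstructor; eauto using wf_ty_weaken, sorting_weaken, ctx_incl_cons.
Qed.

Lemma sorting_open_id G t s : sorting G t s -> forall k v, open_ty k v t = t.
Proof. induction 1; intros; simpl; f_equal; auto. Qed.

Lemma quant_size_sorting G t s : sorting G t s -> quant_size t = 0.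
Proof. induction 1; simpl; lia. Qed.

Lemma wf_ty_of_sorting G t : sorting G t SType -> wf_ty G t.
Proof.
  intros Ht; remember SType as s eqn:Es.
  induction Ht; subst; try discriminate; constructor; auto.
Qed.

Lemma quant_size_open A k u :
  quant_size u = 0 -> quant_size (open_ty k u A) = quant_size A.
Proof. induction A in k |- *; intros; simpl; auto; now destruct (Nat.eqb n k). Qed.

Lemma sorting_nonpos G tau k : sorting G tau k -> nonpos tau.
Proof. now destruct 1. Qed.

Lemma sorting_nonneg G tau k : sorting G tau k -> nonneg tau.
Proof. now destruct 1. Qed.

Section Substitution.
Variables (b : nat) (tau : ty).

Lemma subst_ty_fresh_prop :
  (forall A, ~ In b (fv_ty A) -> subst_ty b tau A = A) /\
  (forall P, ~ In b (fv_prop P) -> subst_prop b tau P = P).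
Proof.
  apply ty_prop_mut; intros; simpl in *; rewrite ?in_app_iff in *;
    try (f_equal; intuition).
  destruct (Nat.eqb_spec n b); intuition.
Qed.

Lemma subst_ty_fresh A : ~ In b (fv_ty A) -> subst_ty b tau A = A.
Proof. apply subst_ty_fresh_prop. Qed.

Hypothesis tau_closed : forall k v, open_ty k v tau = tau.

Lemma subst_open_ty_prop :
  (forall A k u, subst_ty b tau (open_ty k u A)
                 = open_ty k (subst_ty b tau u) (subst_ty b tau A)) /\
  (forall P k u, subst_prop b tau (open_prop k u P)
                 = open_prop k (subst_ty b tau u) (subst_prop b tau P)).
Proof.
  apply ty_prop_mut; intros; simpl; try congruence.
  - destruct (Nat.eqb n b); simpl; auto.
  - destruct (Nat.eqb n k); simpl; auto.
Qed.

Lemma subst_open A u :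
  subst_ty b tau (open A u) = open (subst_ty b tau A) (subst_ty b tau u).
Proof. apply subst_open_ty_prop. Qed.

Lemma subst_open_fresh A : ~ In b (fv_ty A) ->
  subst_ty b tau (open A (TFVar b)) = open A tau.
Proof.
  intros Hb; rewrite subst_open, subst_ty_fresh by exact Hb; simpl.
  now rewrite Nat.eqb_refl.
Qed.

Lemma subst_open_var A a : a <> b ->
  subst_ty b tau (open A (TFVar a)) = open (subst_ty b tau A) (TFVar a).
Proof.
  intros Hab; rewrite subst_open; simpl.
  now destruct (Nat.eqb_spec a b).
Qed.

End Substitution.

Definition ctx_subst_rel (b : nat) (k : sort) (G1 G2 : ctx) : Prop :=
  forall a s, In (DUvar a s) G1 ->
    (a = b /\ s = k) \/ (a <> b /\ In (DUvar a s) G2).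

Lemma ctx_subst_rel_cons b k G1 G2 a s : a <> b -> ctx_subst_rel b k G1 G2 ->
  ctx_subst_rel b k (DUvar a s :: G1) (DUvar a s :: G2).
Proof.
  unfold ctx_subst_rel; simpl; intros Hab Hrel a' s' [Heq|Hin].
  - injection Heq as -> ->; auto.
  - destruct (Hrel _ _ Hin) as [?|[? ?]]; auto.
Qed.

Lemma ctx_subst_rel_head b k G :
  ~ In b (ctx_uvars G) -> ctx_subst_rel b k (DUvar b k :: G) G.
Proof.
  intros Hb a s [Heq|Hin]; [injection Heq as -> ->; auto|].
  right; split; auto; intros ->; eauto using in_ctx_uvars.
Qed.

Section SubstitutionJudgments.
Variables (b : nat) (k : sort) (tau : ty).

Lemma sorting_subst G1 G2 t s : ctx_subst_rel b k G1 G2 -> sorting G2 tau k ->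
  sorting G1 t s -> sorting G2 (subst_ty b tau t) s.
Proof.
  intros Hrel Htau; induction 1; simpl; try (constructor; auto).
  destruct (Hrel _ _ H) as [[-> ->]|[Hab Hin]].
  - now rewrite Nat.eqb_refl.
  - destruct (Nat.eqb_spec a b); [contradiction|constructor; auto].
Qed.

Lemma wf_prop_subst G1 G2 P : ctx_subst_rel b k G1 G2 -> sorting G2 tau k ->
  wf_prop G1 P -> wf_prop G2 (subst_prop b tau P).
Proof. destruct P; simpl; intuition; eapply sorting_subst; eauto. Qed.

Lemma wf_ty_subst G1 G2 A : ctx_subst_rel b k G1 G2 -> sorting G2 tau k ->
  wf_ty G1 A -> wf_ty G2 (subst_ty b tau A).
Proof.
  intros Hrel Htau HA; revert G2 Hrel Htau.
  induction HA; intros G2 Hrel Htau; simpl;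
    try (constructor; eauto using sorting_subst, wf_prop_subst; fail).
  - destruct (Hrel _ _ H) as [[-> <-]|[Hab Hin]].
    + rewrite Nat.eqb_refl; now apply wf_ty_of_sorting.
    + destruct (Nat.eqb_spec a b); [contradiction|constructor; auto].
  - apply W_All with (b :: L); intros a Ha; simpl in Ha.
    rewrite <- subst_open_var by (eauto using sorting_open_id; intuition).
    apply H0; [intuition|apply ctx_subst_rel_cons; intuition|].
    eauto using sorting_weaken, ctx_incl_tl.
  - apply W_Ex with (b :: L); intros a Ha; simpl in Ha.
    rewrite <- subst_open_var by (eauto using sorting_open_id; intuition).
    apply H0; [intuition|apply ctx_subst_rel_cons; intuition|].
    eauto using sorting_weaken, ctx_incl_tl.
Qed.

Lemma nonpos_subst G A : sorting G tau k -> nonpos A -> nonpos (subst_ty b tau A).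
Proof.
  intros Htau; destruct A; simpl; auto.
  destruct (Nat.eqb n b); eauto using sorting_nonpos.
Qed.

Lemma nonneg_subst G A : sorting G tau k -> nonneg A -> nonneg (subst_ty b tau A).
Proof.
  intros Htau; destruct A; simpl; auto.
  destruct (Nat.eqb n b); eauto using sorting_nonneg.
Qed.

Lemma sub_subst G1 G2 p A B : ctx_subst_rel b k G1 G2 -> sorting G2 tau k ->
  sub G1 p A B -> sub G2 p (subst_ty b tau A) (subst_ty b tau B).
Proof.
  intros Hrel Htau HAB; revert G2 Hrel Htau.
  induction HAB; intros G2 Hrel Htau; simpl.
  - apply Sub_Refl; eauto using wf_ty_subst, nonpos_subst, nonneg_subst.
  - apply Sub_AllL with (subst_ty b tau tau0); [eapply sorting_subst; eauto|].
    rewrite <- subst_open by eauto using sorting_open_id; auto.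
  - apply Sub_AllR with (b :: L); intros a Ha; simpl in Ha.
    rewrite <- subst_open_var by (eauto using sorting_open_id; intuition).
    apply H0; [intuition|apply ctx_subst_rel_cons; intuition|].
    eauto using sorting_weaken, ctx_incl_tl.
  - apply Sub_ExL with (b :: L); intros a Ha; simpl in Ha.
    rewrite <- subst_open_var by (eauto using sorting_open_id; intuition).
    apply H0; [intuition|apply ctx_subst_rel_cons; intuition|].
    eauto using sorting_weaken, ctx_incl_tl.
  - apply Sub_ExR with (subst_ty b tau tau0); [eapply sorting_subst; eauto|].
    rewrite <- subst_open by eauto using sorting_open_id; auto.
  - apply Sub_MinusPlus; eauto using nonpos_subst.
  - apply Sub_PlusMinus; eauto using nonneg_subst.
Qed.

End SubstitutionJudgments.

Lemma sub_open_r G p k L A B tau :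
  (forall b, ~ In b L -> sub (DUvar b k :: G) p A (open B (TFVar b))) ->
  sorting G tau k -> sub G p A (open B tau).
Proof.
  intros HAB Htau.
  destruct (exists_fresh (L ++ fv_ty A ++ fv_ty B ++ ctx_uvars G)) as [b Hb].
  rewrite !in_app_iff in Hb.
  pose proof (sub_subst b k tau _ G p _ _ (ctx_subst_rel_head b k G ltac:(tauto)) Htau
                (HAB b ltac:(tauto))) as Hsub.
  rewrite subst_ty_fresh, subst_open_fresh in Hsub
    by (eauto using sorting_open_id; tauto).
  exact Hsub.
Qed.

Lemma sub_open_l G p k L A B tau :
  (forall a, ~ In a L -> sub (DUvar a k :: G) p (open A (TFVar a)) B) ->
  sorting G tau k -> sub G p (open A tau) B.
Proof.
  intros HAB Htau.
  destruct (exists_fresh (L ++ fv_ty A ++ fv_ty B ++ ctx_uvars G)) as [a Ha].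
  rewrite !in_app_iff in Ha.
  pose proof (sub_subst a k tau _ G p _ _ (ctx_subst_rel_head a k G ltac:(tauto)) Htau
                (HAB a ltac:(tauto))) as Hsub.
  rewrite (subst_ty_fresh a tau B), subst_open_fresh in Hsub
    by (eauto using sorting_open_id; tauto).
  exact Hsub.
Qed.

Definition sub_trans_at (B : ty) : Prop :=
  forall G p A C, sub G p A B -> sub G p B C -> sub G p A C.

Ltac absurd_polarity := unfold nonpos, nonneg in *; simpl in *; discriminate.

Section Cut.
Variable n : nat.
Hypothesis sub_trans_below : forall B, quant_size B < n -> sub_trans_at B.

Lemma sub_trans_all G k M C tau A :
  quant_size M < n -> sorting G tau k -> sub G Minus (open M tau) C ->
  sub G Minus A (TAll k M) -> sub G Minus A C.
Proof.
  intros HM Htau HMC HA.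
  remember (TAll k M) as B eqn:EB; remember Minus as p eqn:Ep.
  induction HA; subst; try discriminate; try absurd_polarity.
  - eapply Sub_AllL; eauto.
  - injection EB as -> ->.
    apply (sub_trans_below (open M tau)); [|eapply sub_open_r; eauto|exact HMC].
    unfold open; rewrite quant_size_open by eauto using quant_size_sorting; exact HM.
Qed.

Lemma sub_trans_ex G k M C L A :
  quant_size M < n ->
  (forall a, ~ In a L -> sub (DUvar a k :: G) Plus (open M (TFVar a)) C) ->
  sub G Plus A (TEx k M) -> sub G Plus A C.
Proof.
  intros HM HMC HA; revert HMC.
  remember (TEx k M) as B eqn:EB; remember Plus as p eqn:Ep.
  induction HA; intros HMC; subst; try discriminate; try absurd_polarity.
  - apply Sub_ExL with L0; intros a Ha.
    apply H0; auto; intros a' Ha'.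
    eapply sub_weaken; [apply HMC, Ha'|apply ctx_incl_cons, ctx_incl_tl].
  - injection EB as -> ->.
    apply (sub_trans_below (open M tau)); [|exact HA|eapply sub_open_l; eauto].
    unfold open; rewrite quant_size_open by eauto using quant_size_sorting; exact HM.
Qed.

Lemma sub_trans_step G p B C : sub G p B C -> quant_size B <= n ->
  forall G' A, ctx_incl G G' -> sub G' p A B -> sub G' p A C.
Proof.
  induction 1 as [G p M | G k M C tau Htau HMC | G k M C L HMC IH
                 | G k M C L HMC | G k M C tau Htau HMC IH
                 | G M C HMC IH HM HC | G M C HMC IH HM HC];
    intros Hn G' A Hincl HA; simpl in Hn.
  - exact HA.
  - eapply sub_trans_all; eauto using sorting_weaken, sub_weaken; lia.
  - apply Sub_AllR with L; intros b Hb.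
    apply (IH b Hb Hn); [apply ctx_incl_cons, Hincl|].
    eapply sub_weaken; [exact HA|apply ctx_incl_tl].
  - apply (sub_trans_ex G' k M C L); [lia| |exact HA]; intros a Ha.
    eapply sub_weaken; [apply HMC, Ha|apply ctx_incl_cons, Hincl].
  - eapply Sub_ExR; eauto using sorting_weaken.
  - revert Hincl; remember Plus as p eqn:Ep.
    induction HA; intros Hincl; subst; try discriminate; try absurd_polarity.
    + apply Sub_MinusPlus; auto; eapply sub_weaken; eauto.
    + apply Sub_ExL with L; intros a Ha.
      apply H0; auto; intros x s Hx; right; auto.
    + apply Sub_MinusPlus; auto.
  - revert Hincl; remember Minus as p eqn:Ep.
    induction HA; intros Hincl; subst; try discriminate; try absurd_polarity.
    + apply Sub_PlusMinus; auto; eapply sub_weaken; eauto.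
    + eapply Sub_AllL; eauto.
    + apply Sub_PlusMinus; auto.
Qed.

End Cut.

Lemma sub_trans B : sub_trans_at B.
Proof.
  remember (quant_size B) as n eqn:En; revert B En.
  induction n as [n IHn] using lt_wf_ind; intros B En G p A C HAB HBC.
  assert (Hbelow : forall B', quant_size B' < n -> sub_trans_at B')
    by (intros B' HB'; eapply IHn; eauto).
  exact (sub_trans_step n Hbelow G p B C HBC ltac:(lia) G A (ctx_incl_refl G) HAB).
Qed.

Theorem mainTheorem4 :
  forall (G : ctx) (p : polarity) (A B C : ty),
    wf_ty G A -> wf_ty G B -> wf_ty G C ->
    sub G p A B -> sub G p B C -> sub G p A C.
Proof.
  intros G p A B C _ _ _; apply sub_trans.
Qed.
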